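(* Let $\pi=\sigma[\alpha_1,\dots,\alpha_m]$ be an involution, where $\sigma$ is a simple permutation of length $m\ge 4$ and $\alpha_1,\dots,\alpha_m$ are nonempty permutations. Then $\sigma$ is an involution and $\alpha_i=\alpha_{\sigma(i)}^{-1}$ for all $i\in[m]$.
   Context: An interval of $\pi\in S_n$ is a set of contiguous indices $[a,b]$ whose image under $\pi$ is a set of consecutive integers; $\pi$ is simple if its only intervals have size $0$, $1$, or $n$. For $\sigma\in S_m$ and nonempty permutations $\alpha_1,\dots,\alpha_m$, the inflation $\sigma[\alpha_1,\dots,\alpha_m]$ is the permutation obtained by replacing each entry $\sigma(i)$ by an interval (contiguous positions, consecutive values) order-isomorphic to $\alpha_i$. An involution is a permutation equal to its own inverse. *)

(* Permutations of [n] are 'S_n = {perm 'I_n} (0-based). *)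
From mathcomp Require Import all_boot all_order all_fingroup.
Set Implicit Arguments. Unset Strict Implicit. Unset Printing Implicit Defensive.

Definition contiguous n (A : {set 'I_n}) : Prop :=
  forall x y z : 'I_n, x \in A -> z \in A -> (x <= y <= z)%N -> y \in A.

Definition perm_interval n (s : 'S_n) (A : {set 'I_n}) : Prop :=
  contiguous A /\ contiguous (s @: A).

Definition simple_perm n (s : 'S_n) : Prop :=
  forall A : {set 'I_n}, perm_interval s A ->
    #|A| = 0 \/ #|A| = 1 \/ #|A| = n.

Definition involution n (s : 'S_n) : Prop := (s^-1)%g = s.

Definition natperm n (s : 'S_n) (p : nat) : nat :=
  if (insub p : option 'I_n) is Some o then val (s o) else p.

(* pi = sigma[alpha_1,...,alpha_m], alpha_i of size k i, pi of size N = sum k: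
   block i occupies positions pos_off i .. pos_off i + k i - 1 and
   values val_off i .. val_off i + k i - 1, in the pattern of alpha_i. *)
Definition pos_off m (k : 'I_m -> nat) (i : 'I_m) : nat :=
  \sum_(l < m | (l < i)%N) k l.
Definition val_off m (sigma : 'S_m) (k : 'I_m -> nat) (i : 'I_m) : nat :=
  \sum_(l < m | (sigma l < sigma i)%N) k l.

Definition is_inflation m (sigma : 'S_m) (k : 'I_m -> nat)
    (alpha : forall i : 'I_m, 'S_(k i)) N (pi : 'S_N) : Prop :=
  N = (\sum_(i < m) k i)%N /\
  forall (i : 'I_m) (j : 'I_(k i)),
    natperm pi (pos_off k i + j) = (val_off sigma k i + alpha i j)%N.

(* Let P_i and V_i be the positions and the values occupied by the i-th block
   of pi = sigma[alpha_1, ..., alpha_m].  For an interval I of pi, the blocks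
   meeting I and the blocks contained in I both form intervals of sigma.  As
   sigma is simple with at least four points, I lies inside a single block or
   is everything: if I meets every block, it contains the (at least two) inner
   blocks, hence all blocks.
   When pi is an involution it maps V_i back onto P_i, so V_i is a proper
   interval of pi and V_i is contained in some P_(f i).  Applying pi gives
   P_i inside V_(f i), so f is an involution and V_i = P_(f i).  The V_i are
   ordered like sigma, the P_i like the indices, which forces f = sigma; then
   pi (pi x) = x on P_i reads alpha_(sigma i) (alpha_i j) = j. *)

From mathcomp Require Import all_boot all_order all_fingroup.
From mathcomp Require Import zify.
Set Implicit Arguments. Unset Strict Implicit. Unset Printing Implicit Defensive.

Definition block N (o l : nat) : {set 'I_N} := [set x : 'I_N | o <= x < o + l].

Lemma card_block N o l : o + l <= N -> #|block N o l| = l.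
Proof.
elim: l => [|l IHl] le_lN.
  by apply/eqP; rewrite cards_eq0; apply/eqP/setP => x; rewrite !inE; lia.
have lt_lN : o + l < N by lia.
rewrite (_ : block N o l.+1 = Ordinal lt_lN |: block N o l).
  by rewrite cardsU1 IHl ?inE /=; lia.
by apply/setP => x; rewrite !inE -val_eqE /=; lia.
Qed.

Lemma block_contiguous N o l : contiguous (block N o l).
Proof. by move=> x y z; rewrite !inE; lia. Qed.

Lemma block_inj N o l o' l' : 0 < l -> o + l <= N -> o' + l' <= N ->
  block N o l = block N o' l' -> o = o' /\ l = l'.
Proof.
move=> l_gt0 le_lN le_l'N eq_b.
have eq_l : l = l' by rewrite -(card_block le_lN) eq_b card_block.
have lt_oN : o < N by lia.
have lt_o'N : o' < N by lia.
have : Ordinal lt_oN \in block N o' l' by rewrite -eq_b inE /=; lia.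
have : Ordinal lt_o'N \in block N o l by rewrite eq_b inE /=; lia.
by rewrite !inE /=; lia.
Qed.

Lemma cards_ord_setT n (A : {set 'I_n}) : #|A| = n -> A = setT.
Proof.
by move=> cardA; apply/eqP; rewrite eqEcard subsetT cardsT cardA card_ord leqnn.
Qed.

Lemma perm_imset_subset (T : finType) (s : {perm T}) (A B : {set T}) :
  (s @: A \subset s @: B) = (A \subset B).
Proof.
apply/idP/idP => [sAB | /imsetS //]; apply/subsetP => x Ax.
rewrite -(mem_imset B x (@perm_inj _ s)).
by apply: (subsetP sAB); apply: imset_f.
Qed.

Lemma homo_ltn_ord_id m (g : 'I_m -> 'I_m) :
  {homo g : a b / a < b} -> g =1 id.
Proof.
move=> g_lt; have g_inj : injective g.
  move=> a b eq_g; apply: val_inj.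
  by case: (ltngtP a b) => // /g_lt; rewrite eq_g ltnn.
have le_card o l o' l' : o + l <= m -> o' + l' <= m ->
    g @: block m o l \subset block m o' l' -> l <= l'.
  by move=> le_lm le_l'm /subset_leq_card; rewrite card_imset // !card_block.
move=> a; apply: val_inj => /=; apply/eqP; rewrite eqn_leq; apply/andP; split.
  have: m - a.+1 <= m - (g a).+1.
    apply: (le_card a.+1 _ (g a).+1); rewrite ?subnKC //.
    apply/subsetP => _ /imsetP[b + ->]; rewrite !inE => /andP[/g_lt lt_gab _].
    by have := ltn_ord (g b); lia.
  by have := ltn_ord a; have := ltn_ord (g a); lia.
apply: (le_card 0 _ 0); rewrite ?add0n; [exact: ltnW | exact: ltnW |].
by apply/subsetP => _ /imsetP[b + ->]; rewrite !inE => /andP[_ /g_lt]; lia.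
Qed.

Definition convex_by m (r : 'I_m -> nat) (J : {set 'I_m}) : Prop :=
  forall a b c, a \in J -> c \in J -> r a <= r b <= r c -> b \in J.

Lemma contiguous_imset_perm m (s : 'S_m) (J : {set 'I_m}) :
  convex_by (fun a => val (s a)) J -> contiguous (s @: J).
Proof.
move=> cJ _ y _ /imsetP[a Ja ->] /imsetP[c Jc ->] le_ayc.
by rewrite -(permKV s y) imset_f // (cJ a _ c) ?permKV.
Qed.

Lemma leq_sum_subpred m (k : 'I_m -> nat) (P Q : pred 'I_m) a :
  subpred P Q -> Q a -> ~~ P a ->
  \sum_(l | P l) k l + k a <= \sum_(l | Q l) k l.
Proof.
move=> sPQ Qa nPa; rewrite (bigID P Q) /=.
rewrite [X in _ <= _ + X](bigD1 a) /=; last by rewrite Qa.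
rewrite addnA [\sum_(i < m | Q i && P i) k i](eq_bigl P) ?leq_addr //.
by move=> l; case Pl: (P l); rewrite ?andbT ?andbF ?sPQ.
Qed.

Lemma offset_lt m (k r : 'I_m -> nat) a b : r a < r b ->
  \sum_(l | r l < r a) k l + k a <= \sum_(l | r l < r b) k l.
Proof.
by move=> lt_ab; apply: leq_sum_subpred => [l|//|]; rewrite /= ?ltnn //; lia.
Qed.

Lemma offset_bound m (k r : 'I_m -> nat) a :
  \sum_(l | r l < r a) k l + k a <= \sum_l k l.
Proof. by apply: leq_sum_subpred => //=; rewrite ltnn. Qed.

Lemma prefix_sum_cover (K : nat -> nat) n x : x < \sum_(l < n) K l ->
  exists2 l, l < n & \sum_(i < l) K i <= x < \sum_(i < l) K i + K l.
Proof.
elim: n => [|n IHn]; first by rewrite big_ord0.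
rewrite big_ord_recr /= => lt_x.
case: (ltnP x (\sum_(i < n) K i)) => [/IHn[l] | le_x].
  by exists l => //; apply: ltnW.
by exists n; rewrite ?le_x.
Qed.

Lemma natperm_ord n (s : 'S_n) (x : 'I_n) : natperm s x = s x.
Proof. by rewrite /natperm valK. Qed.

Lemma natpermK n (s : 'S_n) : cancel (natperm s) (natperm s^-1).
Proof.
move=> x; case: (ltnP x n) => [lt_xn | le_nx].
  by rewrite -[x]/(val (Ordinal lt_xn)) !natperm_ord permK.
by rewrite /natperm !insubF // ltnNge le_nx.
Qed.

Section OrderedBlocks.

Variables (N m : nat) (r off k : 'I_m -> nat).
Hypotheses (r_inj : injective r) (k_gt0 : forall a, 0 < k a).
Hypothesis off_bound : forall a, off a + k a <= N.
Hypothesis off_lt : forall a b, r a < r b -> off a + k a <= off b.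

Local Notation B a := (block N (off a) (k a)).

Lemma block_neq0 a : B a != set0.
Proof.
have lt_aN : off a < N by have := k_gt0 a; have := off_bound a; lia.
by apply/set0Pn; exists (Ordinal lt_aN); rewrite inE /=; have := k_gt0 a; lia.
Qed.

Lemma block_index_uniq a b x : x \in B a -> x \in B b -> a = b.
Proof.
rewrite !inE => xa xb; apply: r_inj.
by case: (ltngtP (r a) (r b)) => // [/off_lt|/off_lt]; lia.
Qed.

Lemma convex_by_strict (J : {set 'I_m}) :
  (forall a b c, a \in J -> c \in J -> r a < r b < r c -> b \in J) ->
  convex_by r J.
Proof.
move=> cJ a b c aJ cJ' /andP[].
case: (ltngtP (r a) (r b)) => // [lt_ab | /r_inj <- //] _.
case: (ltngtP (r b) (r c)) => // [lt_bc | /r_inj -> //] _.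
by apply: (cJ a _ c) => //; rewrite lt_ab.
Qed.

Lemma block_sub_between (I : {set 'I_N}) a b c : contiguous I ->
  B a :&: I != set0 -> B c :&: I != set0 -> r a < r b < r c -> B b \subset I.
Proof.
move=> cI /set0Pn[x /setIP[xa xI]] /set0Pn[z /setIP[zc zI]] /andP[lt_ab lt_bc].
apply/subsetP => y yb; apply: (cI x y z) => //.
move: xa yb zc; rewrite !inE.
by have := off_lt lt_ab; have := off_lt lt_bc; lia.
Qed.

Lemma blocks_meet_convex (I : {set 'I_N}) : contiguous I ->
  convex_by r [set j | B j :&: I != set0].
Proof.
move=> cI; apply: convex_by_strict => a b c; rewrite !inE => aI cI' lt_abc.
have /set0Pn[y yb] := block_neq0 b.
have /subsetP sub_bI := block_sub_between cI aI cI' lt_abc.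
by apply/set0Pn; exists y; rewrite inE yb sub_bI.
Qed.

Lemma blocks_sub_convex (I : {set 'I_N}) : contiguous I ->
  convex_by r [set j | B j \subset I].
Proof.
move=> cI; apply: convex_by_strict => a b c; rewrite !inE.
move=> /setIidPl aI /setIidPl cI'; apply: block_sub_between => //.
  by rewrite aI block_neq0.
by rewrite cI' block_neq0.
Qed.

End OrderedBlocks.

Section Inflation.

Variables (m : nat) (sigma : 'S_m) (k : 'I_m -> nat).
Variables (alpha : forall i : 'I_m, 'S_(k i)) (N : nat) (pi : 'S_N).
Hypotheses (k_gt0 : forall i, 0 < k i) (infl : is_inflation sigma alpha pi).

Local Notation P := (pos_off k).
Local Notation V := (val_off sigma k).
Local Notation Pblock i := (block N (P i) (k i)).
Local Notation Vblock i := (block N (V i) (k i)).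

Lemma pos_off_lt (a b : 'I_m) : a < b -> P a + k a <= P b.
Proof. exact: (@offset_lt m k (fun l => nat_of_ord l) a b). Qed.

Lemma val_off_lt (a b : 'I_m) : sigma a < sigma b -> V a + k a <= V b.
Proof. exact: (@offset_lt m k (fun l => nat_of_ord (sigma l)) a b). Qed.

Lemma pos_off_bound (a : 'I_m) : P a + k a <= N.
Proof. by rewrite infl.1; apply: (offset_bound k (fun l => nat_of_ord l)). Qed.

Lemma val_off_bound (a : 'I_m) : V a + k a <= N.
Proof.
by rewrite infl.1; apply: (offset_bound k (fun l => nat_of_ord (sigma l))).
Qed.

Let sigma_inj : injective (fun a => nat_of_ord (sigma a)).
Proof. by move=> a b /val_inj/perm_inj. Qed.

Lemma imset_Pblock i : pi @: Pblock i = Vblock i.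
Proof.
apply/eqP; rewrite eqEcard (card_imset _ perm_inj).
rewrite !card_block ?pos_off_bound ?val_off_bound //.
rewrite leqnn andbT; apply/subsetP => _ /imsetP[x + ->].
rewrite !inE => /andP[le_Px lt_x].
have lt_j : x - P i < k i by lia.
have := infl.2 i (Ordinal lt_j); rewrite /= subnKC // natperm_ord => ->.
by have := ltn_ord (alpha i (Ordinal lt_j)); lia.
Qed.

Lemma Pblock_cover (x : 'I_N) : exists i, x \in Pblock i.
Proof.
pose K l := if insub l is Some i then k i else 0.
have sumK n : n <= m -> \sum_(l < n) K l = \sum_(l < m | l < n) k l.
  move=> le_nm; rewrite (big_ord_widen _ K le_nm).
  by apply: eq_bigr => l _; rewrite /K valK.
have [|l lt_lm] := @prefix_sum_cover K m x.
  by rewrite sumK //; under eq_bigl do rewrite ltn_ord; rewrite -infl.1.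
rewrite sumK ?(ltnW lt_lm) // /K (insubT (fun n => n < m) lt_lm) /= => x_l.
by exists (Ordinal lt_lm); rewrite inE.
Qed.

Lemma interval_blocks_meet I : perm_interval pi I ->
  perm_interval sigma [set j | Pblock j :&: I != set0].
Proof.
case=> cI cpiI; split.
  exact: blocks_meet_convex val_inj k_gt0 pos_off_bound pos_off_lt _ cI.
apply: contiguous_imset_perm.
have -> : [set j | Pblock j :&: I != set0] =
          [set j | Vblock j :&: pi @: I != set0].
  apply/setP => j; rewrite !inE -imset_Pblock -imsetI ?imset_eq0 //.
  by move=> x y _ _; apply: perm_inj.
exact: blocks_meet_convex sigma_inj k_gt0 val_off_bound val_off_lt _ cpiI.
Qed.

Lemma interval_blocks_sub I : perm_interval pi I ->
  perm_interval sigma [set j | Pblock j \subset I].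
Proof.
case=> cI cpiI; split.
  exact: blocks_sub_convex val_inj k_gt0 pos_off_bound pos_off_lt _ cI.
apply: contiguous_imset_perm.
have -> : [set j | Pblock j \subset I] = [set j | Vblock j \subset pi @: I].
  by apply/setP => j; rewrite !inE -imset_Pblock perm_imset_subset.
exact: blocks_sub_convex sigma_inj k_gt0 val_off_bound val_off_lt _ cpiI.
Qed.

Lemma Pblock_neq0 i : Pblock i != set0.
Proof. exact: block_neq0 k_gt0 pos_off_bound i. Qed.

Lemma Pblock_index_uniq a b x : x \in Pblock a -> x \in Pblock b -> a = b.
Proof. exact: block_index_uniq val_inj pos_off_lt a b x. Qed.

Section SimpleSkeleton.

Hypotheses (m_gt3 : 3 < m) (simple : simple_perm sigma).

Lemma interval_meeting_all_blocks I : perm_interval pi I ->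
  (forall j, Pblock j :&: I != set0) -> I = setT.
Proof.
move=> iI meetI; set F := [set j | Pblock j \subset I].
have lt_0m : 0 < m by lia.
have lt_lastm : m.-1 < m by lia.
have cI : contiguous I by case: iI.
have inner_F (b : 'I_m) : 0 < b < m.-1 -> b \in F.
  rewrite inE; exact: (block_sub_between pos_off_lt cI
    (meetI (Ordinal lt_0m)) (meetI (Ordinal lt_lastm))).
(* Blocks 1 and 2 are inner blocks: this is where 3 < m is used. *)
have F_gt1 : 1 < #|F|.
  have lt_1m : 1 < m by lia.
  have lt_2m : 2 < m by lia.
  rewrite -[1]/(2.-1) -(cards2 (Ordinal lt_1m) (Ordinal lt_2m)).
  rewrite subset_leq_card //.
  by apply/subsetP => j /set2P[-> | ->]; apply: inner_F => /=; lia.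
have FT : F = setT.
  have := simple (A := F) (interval_blocks_sub iI).
  by case=> [|[|/cards_ord_setT //]] cF; rewrite cF in F_gt1.
apply/setP => x; rewrite inE; have [j xj] := Pblock_cover x.
have : j \in F by rewrite FT inE.
by rewrite inE => /subsetP; apply.
Qed.

Lemma interval_in_block I : perm_interval pi I ->
  I = setT \/ exists j, I \subset Pblock j.
Proof.
move=> iI; set J := [set j | Pblock j :&: I != set0].
have in_J x j : x \in I -> x \in Pblock j -> j \in J.
  by move=> xI xj; rewrite inE; apply/set0Pn; exists x; rewrite inE xj.
have [/cards0_eq J0 | [/eqP/cards1P[j0 J1] | /cards_ord_setT JT]] :=
  simple (A := J) (interval_blocks_meet iI).
- have lt_0m : 0 < m by lia.
  right; exists (Ordinal lt_0m); apply/subsetP => x xI.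
  by have [j /(in_J x j xI)] := Pblock_cover x; rewrite J0 inE.
- right; exists j0; apply/subsetP => x xI.
  have [j xj] := Pblock_cover x.
  by have := in_J x j xI xj; rewrite J1 => /set1P <-.
- left; apply: interval_meeting_all_blocks => // j.
  have : j \in J by rewrite JT inE.
  by rewrite inE.
Qed.

Section Involution.

Hypothesis invol : involution pi.

Let piK : involutive pi.
Proof. by move=> x; rewrite -{1}invol permK. Qed.

Lemma imset_Vblock i : pi @: Vblock i = Pblock i.
Proof. by rewrite -imset_Pblock -imset_comp (eq_imset _ piK) imset_id. Qed.

Lemma Vblock_interval i : perm_interval pi (Vblock i).
Proof. by split; rewrite ?imset_Vblock; apply: block_contiguous. Qed.

Lemma Vblock_neqT i : Vblock i != setT.
Proof.
have /set0Pn[j] : [set~ i] != set0 by rewrite -card_gt0 cardsC1 card_ord; lia.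
rewrite !inE => ji; apply/eqP => VT.
have := card_block (val_off_bound i); rewrite VT cardsT card_ord infl.1.
rewrite (bigD1 i) // (bigD1 j) /= ?ji //.
by have := k_gt0 j; lia.
Qed.

Lemma Vblock_eq_Pblock : exists f, forall i, Vblock i = Pblock (f i).
Proof.
have [f sVP] : exists f, forall i, Vblock i \subset Pblock (f i).
  apply: (@fin_all_exists _ _ (fun i j => Vblock i \subset Pblock j)) => i.
  have [VT|//] := interval_in_block (Vblock_interval i).
  by have := Vblock_neqT i; rewrite VT eqxx.
have sPV i : Pblock i \subset Vblock (f i).
  by rewrite -imset_Vblock -[Vblock (f i)]imset_Pblock perm_imset_subset.
have ffK i : f (f i) = i.
  have /set0Pn[x xi] := Pblock_neq0 i.
  exact: Pblock_index_uniq (subsetP (sVP _) _ (subsetP (sPV i) _ xi)) xi.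
exists f => i; apply/eqP; rewrite eqEsubset sVP /=.
by have := sPV (f i); rewrite ffK.
Qed.

Lemma val_off_sigma i : V i = P (sigma i) /\ k i = k (sigma i).
Proof.
have [f VP] := Vblock_eq_Pblock.
have offs a : V a = P (f a) /\ k a = k (f a).
  exact: block_inj (k_gt0 a) (val_off_bound a) (pos_off_bound (f a)) (VP a).
suff f_sigma : f =1 sigma by rewrite -f_sigma.
have f_lt a b : sigma a < sigma b -> f a < f b.
  move=> /val_off_lt; rewrite (offs a).1 (offs b).1 (offs a).2.
  have := k_gt0 (f a).
  by case: (ltngtP (f a) (f b)) => // [/pos_off_lt | /val_inj ->]; lia.
move=> a; rewrite -{1}(permK sigma a).
apply: (homo_ltn_ord_id (g := fun c => f ((sigma^-1)%g c))) => c d lt_cd.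
by apply: f_lt; rewrite !permKV.
Qed.

Lemma sigmaK : involutive sigma.
Proof.
have VP a : Vblock a = Pblock (sigma a) by case: (val_off_sigma a) => -> ->.
move=> i; have /set0Pn[x xi] := Pblock_neq0 i.
have xssi : x \in Pblock (sigma (sigma i)).
  by rewrite -VP -imset_Pblock -VP imset_Vblock.
exact: Pblock_index_uniq xssi xi.
Qed.

Lemma alpha_sigma_alpha i (e : k i = k (sigma i)) (j : 'I_(k i)) :
  alpha (sigma i) (cast_ord e (alpha i j)) = j :> nat.
Proof.
have := natpermK pi (P i + j); rewrite invol infl.2 (val_off_sigma i).1.
rewrite -[nat_of_ord (alpha i j)]/(nat_of_ord (cast_ord e (alpha i j))).
by rewrite infl.2 (val_off_sigma (sigma i)).1 sigmaK; lia.
Qed.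

End Involution.
End SimpleSkeleton.
End Inflation.

Theorem proposition5p1 (m : nat) (sigma : 'S_m) (k : 'I_m -> nat)
    (alpha : forall i : 'I_m, 'S_(k i)) (N : nat) (pi : 'S_N) :
  (4 <= m)%N -> simple_perm sigma -> (forall i, (0 < k i)%N) ->
  is_inflation sigma alpha pi -> involution pi ->
  involution sigma /\
  forall i : 'I_m, exists e : k i = k (sigma i),
    cast_perm e (alpha i) = ((alpha (sigma i))^-1)%g.
Proof.
move=> m_gt3 simple k_gt0 infl invol.
have sigmaK := sigmaK k_gt0 infl m_gt3 simple invol.
have off_sigma := val_off_sigma k_gt0 infl m_gt3 simple invol.
have alphaK := alpha_sigma_alpha k_gt0 infl m_gt3 simple invol.
split; first by apply/permP => i; rewrite -{1}(sigmaK i) permK.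
move=> i; exists (off_sigma i).2.
apply/permP => y; rewrite cast_permE; apply: (@perm_inj _ (alpha (sigma i))).
by apply: val_inj; rewrite /= permKV alphaK.
Qed.
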